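(* Let $r\geq 3$ and let $G$ be a connected $(P_4,K_{1,r})$-free graph with at least $3$ vertices. Then $rx_3(G)\leq sdiam_3(G)+r+3$.
   Context: All graphs are finite, simple, undirected. A tree in an edge-colored graph is rainbow if no two of its edges have the same color; an $S$-tree is a tree containing all vertices of $S$. A $3$-rainbow coloring of a connected graph $G$ is an edge-coloring (adjacent edges may share colors) such that every $3$-element vertex set $S$ has a rainbow $S$-tree; $rx_3(G)$ is the minimum number of colors in such a coloring. $sdiam_3(G)$ is the maximum, over all $3$-element $S\subseteq V(G)$, of the minimum number of edges of an $S$-tree. $(P_4,K_{1,r})$-free means no induced subgraph isomorphic to the path $P_4$ on $4$ vertices or to the star $K_{1,r}$. *)

From mathcomp Require Import all_boot.
Set Implicit Arguments. Unset Strict Implicit. Unset Printing Implicit Defensive.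

Section Graphs.
Variable T : finType.
Variable e : rel T.

Definition simple_graph : Prop := symmetric e /\ irreflexive e.
Definition connected_graph : Prop := forall x y : T, connect e x y.

Definition P4_free : Prop :=
  ~ exists a b c d : T,
    [/\ e a b, e b c, e c d,
        [&& a != c, b != d & a != d] &
        [&& ~~ e a c, ~~ e b d & ~~ e a d]].

Definition star_free (r : nat) : Prop :=
  ~ exists (v : T) (L : {set T}),
    [/\ #|L| = r, v \notin L, {in L, forall x, e v x} &
        {in L &, forall x y, x != y -> ~~ e x y}].

Definition is_edge (f : {set T}) : bool :=
  [exists x, exists y, e x y && (f == [set x; y])].

Definition is_tree (V : {set T}) (F : {set {set T}}) : bool :=
  [&& V != set0,
      [forall f in F, is_edge f && (f \subset V)],
      [forall x in V, forall y in V,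
          connect [rel a b | [set a; b] \in F] x y] &
      #|F| == #|V| - 1].

Definition is_Stree (S : {set T}) (VF : {set T} * {set {set T}}) : bool :=
  is_tree VF.1 VF.2 && (S \subset VF.1).

Definition sdist (S : {set T}) : nat :=
  \big[minn/#|T|]_(VF : {set T} * {set {set T}} | is_Stree S VF) #|VF.2|.

Definition sdiam3 : nat := \max_(S : {set T} | #|S| == 3) sdist S.

Definition rainbow (c : {set T} -> nat) (F : {set {set T}}) : bool :=
  [forall f in F, forall g in F, (c f == c g) ==> (f == g)].

Definition rainbow3_coloring k (c : {ffun {set T} -> 'I_k}) : bool :=
  [forall S : {set T}, (#|S| == 3) ==>
     [exists VF, is_Stree S VF && rainbow (fun f => nat_of_ord (c f)) VF.2]].

(* rx_3: least k such that a 3-rainbow coloring with k colours exists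
   (k = #|T|^2 always suffices for connected graphs, the bound being a default) *)
Definition rx3 : nat :=
  \big[minn/#|T| ^ 2]_(k < (#|T| ^ 2).+1 |
       [exists c : {ffun {set T} -> 'I_k}, rainbow3_coloring c]) (k : nat).

End Graphs.

From mathcomp Require Import all_boot zify.
Set Implicit Arguments. Unset Strict Implicit. Unset Printing Implicit Defensive.

(* A connected P4-free graph on at least two vertices is the join of two
   nonempty parts: the common neighbours W of a maximal independent set, and
   the rest.  A vertex of one part sees all of the other part, so
   K_{1,r}-freeness leaves each part with independence number at most r - 1;
   as every maximal clique of a P4-free graph meets every maximal independent
   set, each part is then covered by r - 1 cliques.  Colour an edge inside a
   clique by the sum of the positions of its ends in the clique, mod 4, and an
   edge between clique i of one part and clique j of the other by
   4 + (i + j) mod (r - 1).  Any three vertices are joined by a rainbow path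
   or star of at most four edges, so rx_3(G) <= r + 3. *)

Section RainbowTrees.
Variables (T : finType) (e : rel T) (c : {set T} -> nat).

Lemma is_tree_set1 v : is_tree e [set v] set0.
Proof.
apply/and4P; split.
- by apply/set0Pn; exists v; rewrite inE.
- by apply/forall_inP => f; rewrite inE.
- apply/forall_inP => x /set1P->; apply/forall_inP => y /set1P->.
  exact: connect0.
- by rewrite cards0 cards1.
Qed.

Lemma is_tree_add_leaf V F x y : is_tree e V F -> x \notin V -> y \in V -> e x y ->
  is_tree e (x |: V) ([set x; y] |: F).
Proof.
case/and4P=> _ /forall_inP edgeF /forall_inP connF /eqP cardF xV yV exy.
have xyF : [set x; y] \notin F.
  apply: contra xV => /edgeF /andP[_ /subsetP]; apply; exact: set21.
have sub_conn a b : connect [rel a b | [set a; b] \in F] a b ->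
    connect [rel a b | [set a; b] \in [set x; y] |: F] a b.
  by apply: connect_sub => a' b' /= Fab; apply: connect1; rewrite /= inE Fab orbT.
have conn_xy : connect [rel a b | [set a; b] \in [set x; y] |: F] x y.
  by apply: connect1; rewrite /= setU11.
have conn_yx : connect [rel a b | [set a; b] \in [set x; y] |: F] y x.
  by apply: connect1; rewrite /= setUC setU11.
have connV a b : a \in V -> b \in V -> connect [rel a b | [set a; b] \in F] a b.
  by move=> /connF /forall_inP; apply.
apply/and4P; split.
- by apply/set0Pn; exists x; rewrite setU11.
- apply/forall_inP => f /setU1P[->|/edgeF /andP[edge_f /subsetP sfV]].
    apply/andP; split.
      by apply/existsP; exists x; apply/existsP; exists y; rewrite exy eqxx.
    by rewrite subUset !sub1set setU11 !inE yV orbT.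
  by rewrite edge_f; apply/subsetP => z /sfV zV; rewrite inE zV orbT.
- apply/forall_inP => a /setU1P[->|aV]; apply/forall_inP => b /setU1P[->|bV].
  + exact: connect0.
  + exact: connect_trans conn_xy (sub_conn _ _ (connV _ _ yV bV)).
  + exact: connect_trans (sub_conn _ _ (connV _ _ aV yV)) conn_yx.
  + exact: sub_conn _ _ (connV _ _ aV bV).
- have V0 : 0 < #|V| by apply/card_gt0P; exists y.
  by rewrite (cardsU1 [set x; y] F) (cardsU1 x V) xyF xV cardF; lia.
Qed.

Lemma rainbow_set0 : rainbow c set0.
Proof. by apply/forall_inP => f; rewrite inE. Qed.

Lemma rainbowU1 F g : rainbow c F -> {in F, forall f, c f != c g} ->
  rainbow c (g |: F).
Proof.
move=> /forall_inP rbF gF; apply/forall_inP => f /setU1P fF.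
apply/forall_inP => h /setU1P hF; apply/implyP => /eqP.
case: fF hF => [->|fF] [->|hF] // cfh.
- by move: (gF h hF); rewrite cfh eqxx.
- by move: (gF f fF); rewrite cfh eqxx.
- by move/forall_inP: (rbF f fF) => /(_ h hF) /implyP; apply; apply/eqP.
Qed.

Definition rainbow_tree_on (V : {set T}) (cs : seq nat) :=
  exists F, [/\ is_tree e V F, rainbow c F & {in F, forall f, c f \in cs}].

Definition rainbow_Stree (S : {set T}) :=
  [exists VF, is_Stree e S VF && rainbow c VF.2].

Lemma rainbow_tree_on_set1 v : rainbow_tree_on [set v] [::].
Proof.
by exists set0; split; [apply: is_tree_set1 | apply: rainbow_set0 | move=> f; rewrite inE].
Qed.

Lemma rainbow_tree_on_add V cs x y : rainbow_tree_on V cs ->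
  x \notin V -> y \in V -> e x y -> c [set x; y] \notin cs ->
  rainbow_tree_on (x |: V) (c [set x; y] :: cs).
Proof.
move=> [F [treeF rbF csF]] xV yV exy new_col.
exists ([set x; y] |: F); split; first exact: is_tree_add_leaf.
  by apply: rainbowU1 => // f /csF; apply: contraTneq => ->.
by move=> f /setU1P[->|/csF fcs]; rewrite inE ?eqxx ?fcs ?orbT.
Qed.

Lemma rainbow_tree_on_path x p : uniq (x :: p) -> path e x p ->
  uniq (pairmap (fun a b => c [set a; b]) x p) ->
  rainbow_tree_on [set u in x :: p] (pairmap (fun a b => c [set a; b]) x p).
Proof.
elim: p x => [|y p IHp] x.
  have -> : [set u in [:: x]] = [set x] by apply/setP => u; rewrite !inE.
  by move=> _ _ _; apply: rainbow_tree_on_set1.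
rewrite [uniq _]/= => /andP[xyp uyp] /= /andP[exy pyp] /andP[new_col ucs].
have -> : [set u in [:: x, y & p]] = x |: [set u in y :: p].
  by apply/setP => u; rewrite !inE.
by apply: rainbow_tree_on_add; rewrite ?inE ?eqxx //; apply: IHp.
Qed.

Lemma rainbow_tree_on_Stree V cs (S : {set T}) : rainbow_tree_on V cs -> S \subset V ->
  rainbow_Stree S.
Proof.
move=> [F [treeF rbF _]] SV; apply/existsP; exists (V, F).
by rewrite /is_Stree treeF SV.
Qed.

Lemma rainbow_StreeS (S S' : {set T}) : S \subset S' -> rainbow_Stree S' -> rainbow_Stree S.
Proof.
move=> SS' /existsP[VF /andP[/andP[treeVF S'V] rbVF]]; apply/existsP; exists VF.
by rewrite /is_Stree treeVF (subset_trans SS' S'V).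
Qed.

Lemma rainbow_Stree_path x p (S : {set T}) : uniq (x :: p) -> path e x p ->
  uniq (pairmap (fun a b => c [set a; b]) x p) -> S \subset [set u in x :: p] ->
  rainbow_Stree S.
Proof. by move=> ux px ucs; apply: rainbow_tree_on_Stree; apply: rainbow_tree_on_path. Qed.

End RainbowTrees.

Lemma eq_rainbow_Stree (T : finType) (e : rel T) (c1 c2 : {set T} -> nat) :
  c1 =1 c2 -> rainbow_Stree e c1 =1 rainbow_Stree e c2.
Proof.
move=> c12 S; apply: eq_existsb => VF; congr (_ && _).
by apply: eq_forallb => f; congr (_ ==> _); apply: eq_forallb => g; rewrite !c12.
Qed.

Lemma card3_subset (T : finType) (S : {set T}) : #|S| = 3 ->
  exists x y z, [/\ x != y, x != z, y != z & S \subset [set x; y; z]].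
Proof.
rewrite cardE; case E: (enum S) => [|x [|y [|z [|? ?]]]] // _.
have := enum_uniq (mem S); rewrite E /= !inE !negb_or andbT => /andP[/andP[xy xz] yz].
by exists x, y, z; split => //; apply/subsetP => u; rewrite -mem_enum E !inE orbA.
Qed.

Lemma rainbow3_coloring_triples (T : finType) (e : rel T) k (c : {ffun {set T} -> 'I_k}) :
  (forall x y z, x != y -> x != z -> y != z ->
     rainbow_Stree e (fun f => c f) [set x; y; z]) ->
  rainbow3_coloring e c.
Proof.
move=> rb3; apply/forallP => S; apply/implyP => /eqP /card3_subset[x [y [z [xy xz yz Sxyz]]]].
exact: rainbow_StreeS Sxyz (rb3 x y z xy xz yz).
Qed.

Section Cographs.
Variables (T : finType) (e : rel T).
Implicit Types (U I J K : {set T}) (x y : T).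

Definition independent U := [forall x in U, forall y in U, ~~ e x y].
Definition clique U := [forall x in U, forall y in U, (x != y) ==> e x y].
Definition max_independent_in (U I : {set T}) :=
  maxset [pred J : {set T} | (J \subset U) && independent J] I.
Definition max_clique_in (U K : {set T}) :=
  maxset [pred J : {set T} | (J \subset U) && clique J] K.

Lemma independentP U : reflect {in U &, forall x y, ~~ e x y} (independent U).
Proof.
apply: (iffP forall_inP) => [H x y /H /forall_inP|H x xU]; first exact.
by apply/forall_inP => y; apply: H.
Qed.

Lemma cliqueP U : reflect {in U &, forall x y, x != y -> e x y} (clique U).
Proof.
apply: (iffP forall_inP) => [H x y /H /forall_inP H' /H' /implyP|H x xU]; first exact.
by apply/forall_inP => y yU; apply/implyP; apply: H.
Qed.

Lemma independentS J U : J \subset U -> independent U -> independent J.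
Proof.
move=> /subsetP JU /independentP indU; apply/independentP => x y /JU xU /JU.
exact: indU.
Qed.

Hypotheses (esym : symmetric e) (eirr : irreflexive e) (P4f : P4_free e).

(* The distinctness of a, c and of b, d required by P4_free is free: otherwise
   e a d is one of the hypotheses. *)
Lemma P4_shortcut a b c d : e a b -> e b c -> e c d -> ~~ e a c -> ~~ e b d ->
  a != d -> e a d.
Proof.
move=> eab ebc ecd nac nbd ad.
have [->|ac] := eqVneq a c; first done.
have [<-|bd] := eqVneq b d; first done.
apply/negPn/negP => nad; apply: P4f; exists a, b, c, d.
by split => //; apply/and3P.
Qed.

Lemma independent_set1 x : independent [set x].
Proof. by apply/independentP => a b /set1P-> /set1P->; rewrite eirr. Qed.

Lemma independentU1 x I : independent I -> {in I, forall i, ~~ e x i} ->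
  independent (x |: I).
Proof.
move=> /independentP indI xI; apply/independentP.
move=> a b /setU1P[->|aI] /setU1P[->|bI]; rewrite ?eirr ?xI //.
  by rewrite esym xI.
exact: indI.
Qed.

Lemma cliqueU1 x K : clique K -> {in K, forall k, e x k} -> clique (x |: K).
Proof.
move=> /cliqueP cK xK; apply/cliqueP.
move=> a b /setU1P[->|aK] /setU1P[->|bK]; rewrite ?eqxx // => ab.
- exact: xK.
- by rewrite esym; apply: xK.
- exact: cK ab.
Qed.

Lemma max_independent_nbr U I x : max_independent_in U I -> x \in U -> x \notin I ->
  exists2 i, i \in I & e x i.
Proof.
move=> maxI xU xI; have /andP[IU indI] := maxsetp maxI.
apply/exists_inP; apply: contraNT xI => /exists_inP noxI.
have indxI : independent (x |: I).
  by apply: independentU1 => // i iI; apply/negP => exi; apply: noxI; exists i.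
rewrite -(maxsetsup maxI _ (subsetUr [set x] I)) ?setU11 //.
by rewrite /= subUset sub1set xU IU.
Qed.

Lemma max_clique_nonnbr U K x : max_clique_in U K -> x \in U -> x \notin K ->
  exists2 k, k \in K & ~~ e x k.
Proof.
move=> maxK xU xK; have /andP[KU cK] := maxsetp maxK.
apply/exists_inP; apply: contraNT xK => /exists_inP noxK.
have cxK : clique (x |: K).
  by apply: cliqueU1 => // k kK; apply/negPn/negP => nxk; apply: noxK; exists k.
rewrite -(maxsetsup maxK _ (subsetUr [set x] K)) ?setU11 //.
by rewrite /= subUset sub1set xU KU.
Qed.

(* If K and I were disjoint, take k in K with fewest neighbours in I, a
   neighbour i of k in I and k' in K missing i: the path i - k - k' - j shows
   that every neighbour j of k' in I is a neighbour of k, so k' has fewer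
   neighbours in I than k. *)
Lemma max_clique_meets_max_independent U K I : U != set0 ->
  max_clique_in U K -> max_independent_in U I -> exists2 u, u \in K & u \in I.
Proof.
move=> U0 maxK maxI.
have /andP[KU /cliqueP cK] := maxsetp maxK.
have /andP[IU /independentP indI] := maxsetp maxI.
have [k0 k0K] : exists k0, k0 \in K.
  case: (set_0Vmem K) => [K0|[k kK]]; last by exists k.
  have [u uU] := set0Pn _ U0; exists u.
  have cu : (fun J => (J \subset U) && clique J) [set u].
    rewrite /= sub1set uU; apply/cliqueP => a b /set1P-> /set1P->.
    by rewrite eqxx.
  by rewrite -(maxsetsup maxK cu) ?set11 // K0 sub0set.
apply/exists_inP; apply: contraT => /exists_inP disjKI.
have KnI k : k \in K -> k \notin I by move=> kK; apply/negP => kI; apply: disjKI; exists k.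
pose N k := [set i in I | e k i].
have [k kK minN] := arg_minnP (fun k => #|N k|) k0K.
have [i iI eki] := max_independent_nbr maxI (subsetP KU k kK) (KnI k kK).
have iK : i \notin K by apply: contraL iI; apply: KnI.
have [k' k'K nik'] := max_clique_nonnbr maxK (subsetP IU i iI) iK.
have Nk'k : N k' \subset N k.
  apply/subsetP => j; rewrite !inE => /andP[jI ek'j]; rewrite jI /=.
  apply/negPn/negP => nkj.
  have kk' : k != k' by apply: contraNneq nik' => <-; rewrite esym.
  have ij : i != j by apply: contraNneq nik' => ->; rewrite esym.
  have eik : e i k by rewrite esym.
  have := P4_shortcut eik (cK _ _ kK k'K kk') ek'j nik' nkj ij.
  by rewrite (negbTE (indI i j iI jI)).
have : #|N k'| < #|N k|.
  by apply: proper_card; apply/properP; split => //; exists i; rewrite !inE ?iI ?eki // esym.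
by rewrite ltnNge minN.
Qed.

Lemma clique_cover k U : (forall J, J \subset U -> independent J -> #|J| != k.+1) ->
  exists f : T -> nat, {in U, forall x, f x < k} /\
    {in U &, forall x y, x != y -> f x = f y -> e x y}.
Proof.
elim: k U => [|k IHk] U noJ.
  exists (fun=> 0); split => [x xU|x y xU]; have := noJ [set x];
    by rewrite sub1set xU independent_set1 cards1 => /(_ isT isT).
have [K maxK _] : {K | max_clique_in U K & set0 \subset K}.
  by apply: maxset_exists; rewrite /= sub0set; apply/cliqueP => a b; rewrite inE.
have /andP[KU /cliqueP cK] := maxsetp maxK.
have noJ' J : J \subset U :\: K -> independent J -> #|J| != k.+1.
  move=> JUK indJ; apply/eqP => cardJ.
  have JU : J \subset U by apply: subset_trans JUK (subsetDl U K).
  have [I maxI JI] : {I | max_independent_in U I & J \subset I}.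
    by apply: maxset_exists; rewrite /= JU.
  have /andP[IU indI] := maxsetp maxI.
  have U0 : U != set0.
    have /card_gt0P[j jJ] : 0 < #|J| by rewrite cardJ.
    by apply/set0Pn; exists j; apply: (subsetP JU).
  have [u uK uI] := max_clique_meets_max_independent U0 maxK maxI.
  have uJ : u \notin J by apply: contraL uK => /(subsetP JUK); rewrite inE => /andP[].
  have uJU : u |: J \subset U by rewrite subUset sub1set (subsetP KU).
  have induJ : independent (u |: J).
    by apply: independentS indI; rewrite subUset sub1set uI JI.
  by move: (noJ _ uJU induJ); rewrite cardsU1 uJ cardJ /= eqxx.
have [f [f_lt f_clique]] := IHk _ noJ'.
exists (fun x => if x \in K then k else f x); split => [x xU|x y xU yU xy].
  by case: ifP => xK //; apply: ltn_trans (f_lt x _) _; rewrite ?inE ?xK ?xU.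
case: ifP => xK; case: ifP => yK.
- by move=> _; apply: cK.
- by move=> fy; have := f_lt y; rewrite !inE yK yU -fy ltnn => /(_ isT).
- by move=> fx; have := f_lt x; rewrite !inE xK xU fx ltnn => /(_ isT).
- by apply: f_clique; rewrite ?inE ?xK ?yK.
Qed.

Hypotheses (conn : connected_graph e) (T_gt1 : 1 < #|T|).

Lemma common_nbr x y : x != y -> ~~ e x y -> exists2 w, e x w & e w y.
Proof.
have /connectP[p pxp ->] := conn x y.
suff : [\/ last x p = x, e x (last x p) | exists2 w, e x w & e w (last x p)].
  by case=> [->|->|//]; rewrite ?eqxx.
elim/last_ind: p pxp => [|p z IHp]; first by constructor 1.
rewrite rcons_path last_rcons => /andP[/IHp IH ez]; set y' := last x p in IH ez.
have [-> | zx] := eqVneq z x; first by constructor 1.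
case exz : (e x z); first by constructor 2.
have [y'x | y'x] := eqVneq y' x; first by move: ez; rewrite y'x exz.
case exy' : (e x y'); first by constructor 3; exists y'.
case: IH => [y'E | exy'' | [w exw ewy']]; first by rewrite y'E eqxx in y'x.
  by rewrite exy'' in exy'.
case ewz : (e w z); first by constructor 3; exists w.
by rewrite (P4_shortcut exw ewy' ez) ?exy' ?ewz // eq_sym in exz.
Qed.

Lemma exists_nbr x : exists w, e x w.
Proof.
have [y yx] : exists y, y != x.
  have [a [b [_ _ ab]]] := card_gt1P T_gt1.
  by have [ax|ax] := eqVneq a x; [exists b; rewrite -ax eq_sym | exists a].
case exy : (e x y); first by exists y.
have xy : x != y by rewrite eq_sym.
by have [w exw _] := common_nbr xy (negbT exy); exists w.
Qed.

Lemma independent_common_nbr (s : seq T) : s != [::] ->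
  {in s &, forall a b, ~~ e a b} -> exists w, {in s, forall j, e w j}.
Proof.
elim: s => [//|c [|a s] IHs] _ ind_cs.
  have [w ecw] := exists_nbr c.
  by exists w => j /[!inE] /eqP->; rewrite esym.
have sub_as : {subset a :: s <= c :: a :: s} by move=> j js; rewrite inE js orbT.
have [w ew_as] := IHs isT (sub_in2 sub_as ind_cs).
have [ewc|newc] := boolP (e w c).
  by exists w => j /[!inE] /orP[/eqP->|/ew_as].
have nc_as j : j \in a :: s -> ~~ e c j.
  by move=> js; apply: ind_cs; rewrite ?mem_head ?sub_as.
have c_as j : j \in a :: s -> c != j.
  by move=> /ew_as ewj; apply: contraNneq newc => ->.
have [w' ecw' ew'a] := common_nbr (c_as a (mem_head _ _)) (nc_as a (mem_head _ _)).
have ew'w : e w' w.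
  apply/negPn/negP => nw'w.
  have eaw : e a w by rewrite esym ew_as ?mem_head.
  have cw : c != w by apply: contraNneq (nc_as a (mem_head _ _)) => ->; rewrite esym.
  have := P4_shortcut ecw' ew'a eaw (nc_as a (mem_head _ _)) nw'w cw.
  by rewrite esym (negbTE newc).
exists w' => j /[!inE] /orP[/eqP->|js]; first by rewrite esym.
apply/negPn/negP => nw'j.
have ncw : ~~ e c w by rewrite esym.
have := P4_shortcut ecw' ew'w (ew_as j js) ncw nw'j (c_as j js).
by rewrite (negbTE (nc_as j js)).
Qed.

Lemma join_decomposition : exists W : {set T},
  [/\ W != set0, ~: W != set0 & {in ~: W & W, forall x w, e x w}].
Proof.
have [I maxI _] : {I | max_independent_in setT I & set0 \subset I}.
  by apply: maxset_exists; rewrite /= subsetT; apply/independentP => a b; rewrite inE.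
have /andP[_ /independentP indI] := maxsetp maxI.
have [i0 i0I] : exists i0, i0 \in I.
  have /card_gt0P[x _] : 0 < #|T| by apply: ltnW.
  have [xI|xI] := boolP (x \in I); first by exists x.
  by have [i iI _] := max_independent_nbr maxI (in_setT x) xI; exists i.
pose W := [set w | [forall i in I, e w i]].
have eWI w i : w \in W -> i \in I -> e w i by rewrite inE => /forall_inP; apply.
exists W; split.
- have [|a b|w ewI] := independent_common_nbr (s := enum I).
  + by apply: contraTneq i0I => EI; rewrite -mem_enum EI.
  + by rewrite !mem_enum; apply: indI.
  apply/set0Pn; exists w; rewrite inE; apply/forall_inP => i iI.
  by apply: ewI; rewrite mem_enum.
- by apply/set0Pn; exists i0; rewrite inE; apply/negP => /eWI/(_ i0I); rewrite eirr.
move=> x w; rewrite in_setC => xW wW; have [xI|xI] := boolP (x \in I).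
  by rewrite esym; apply: eWI.
have [i iI exi] := max_independent_nbr maxI (in_setT x) xI.
have [j jI nxj] : exists2 j, j \in I & ~~ e x j.
  by move: xW; rewrite inE negb_forall_in => /exists_inP[j]; exists j.
apply/negPn/negP => nxw.
have eiw : e i w by rewrite esym eWI.
have xj : x != j by apply: contraNneq xI => ->.
have := P4_shortcut exi eiw (eWI w j wW jI) nxw (indI i j iI jI) xj.
by rewrite (negbTE nxj).
Qed.

End Cographs.

Lemma set3C12 (T : finType) (x y z : T) : [set x; y; z] = [set y; x; z].
Proof. by rewrite (setUC [set x]). Qed.

Lemma set3C23 (T : finType) (x y z : T) : [set x; y; z] = [set x; z; y].
Proof. by rewrite setUAC. Qed.

Lemma set3_subset (T : finType) (x y z : T) (s : seq T) :
  x \in s -> y \in s -> z \in s -> [set x; y; z] \subset [set u in s].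
Proof.
by move=> xs ys zs; apply/subsetP => u; rewrite !inE -orbA => /or3P[]/eqP->.
Qed.

Lemma addn_mod4_neq a b c : a %% 4 != c %% 4 -> (a + b) %% 4 != (b + c) %% 4.
Proof. lia. Qed.

(* With r the common residue, the detour a - b - (r + 1) - (r + 2) - c has
   colours 2r, 2r + 1, 2r + 3, 2r + 2 mod 4. *)
Lemma mod4_detour a b c n : a != b -> a != c -> b != c -> a < n -> b < n -> c < n ->
  a %% 4 = b %% 4 -> b %% 4 = c %% 4 ->
  [/\ a %% 4 + 2 < n, uniq [:: a; b; a %% 4 + 1; a %% 4 + 2; c] &
      uniq (pairmap (fun i j => (i + j) %% 4) a [:: b; a %% 4 + 1; a %% 4 + 2; c])].
Proof. by move=> *; split; rewrite /= ?inE; lia. Qed.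

Section Colouring.
Variables (T : finType) (e : rel T) (side : T -> bool) (cl : T -> nat) (m : nat).
Hypotheses (cl_lt : forall x, cl x < m)
  (e_class : forall x y, side x = side y -> cl x = cl y -> x != y -> e x y)
  (e_cross : forall x y, side x != side y -> e x y)
  (side_surj : forall b, exists u, side u = b).

Definition class x := [set y | (side y == side x) && (cl y == cl x)].
Definition rank x := index x (enum (class x)).

(* The cliques are the classes of (side, cl); rank numbers each clique from 0.
   Pairs on the same side but in different cliques are never used, and get a
   junk colour. *)
Definition edge_colour (f : {set T}) : nat :=
  if [forall x in f, forall y in f, side x == side y]
  then (\sum_(x in f) rank x) %% 4
  else 4 + (\sum_(x in f) cl x) %% m.

Lemma sum_set2 (F : T -> nat) x y : x != y -> \sum_(u in [set x; y]) F u = F x + F y.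
Proof. by move=> xy; rewrite big_setU1 ?inE // big_set1. Qed.

Lemma edge_colour_inner x y : x != y -> side x = side y ->
  edge_colour [set x; y] = (rank x + rank y) %% 4.
Proof.
move=> xy sxy; rewrite /edge_colour !sum_set2 //.
suff -> : [forall u in [set x; y], forall v in [set x; y], side u == side v] by [].
by apply/forall_inP => u /set2P[]->; apply/forall_inP => v /set2P[]->; rewrite ?sxy eqxx.
Qed.

Lemma edge_colour_cross x y : side x != side y ->
  edge_colour [set x; y] = 4 + (cl x + cl y) %% m.
Proof.
move=> sxy; have xy : x != y by apply: contraNneq sxy => ->.
rewrite /edge_colour !sum_set2 //.
suff -> : [forall u in [set x; y], forall v in [set x; y], side u == side v] = false by [].
apply: negbTE; apply/negP => /forall_inP /(_ x (set21 _ _)) /forall_inP /(_ y (set22 _ _)).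
exact/negP.
Qed.

Lemma edge_colour_lt f : 0 < m -> edge_colour f < 4 + m.
Proof.
move=> m_gt0; rewrite /edge_colour; case: ifP => _.
  by apply: leq_trans (ltn_pmod _ _) (leq_addr _ _).
by rewrite ltn_add2l ltn_pmod.
Qed.

Lemma inner_cross_neq x y u v : x != y -> side x = side y -> side u != side v ->
  edge_colour [set x; y] != edge_colour [set u; v].
Proof.
move=> xy sxy suv; rewrite edge_colour_inner // edge_colour_cross //.
by apply: contraTneq (ltn_pmod (rank x + rank y) (isT : 0 < 4)) => ->; rewrite ltnNge leq_addr.
Qed.

Lemma cross_colour_neq x y u : side x != side u -> side y != side u -> cl x != cl y ->
  edge_colour [set x; u] != edge_colour [set y; u].
Proof.
move=> sxu syu; rewrite !edge_colour_cross // eqn_add2l eqn_modDr.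
by rewrite !modn_small.
Qed.

Lemma rainbow_cross x y z : side y = side x -> side z != side x -> x != y ->
  rainbow_Stree e edge_colour [set x; y; z].
Proof.
move=> syx szx xy; have szy : side z != side y by rewrite syx.
have xz : x != z by apply: contraNneq szx => ->.
have yz : y != z by apply: contraNneq szy => ->.
have [cxy|cxy] := eqVneq (cl x) (cl y).
  apply: (@rainbow_Stree_path _ _ _ x [:: y; z]).
  - by rewrite /= !inE negb_or xy xz yz.
  - by rewrite /= e_class ?syx // e_cross // eq_sym.
  - by rewrite /= inE andbT inner_cross_neq ?syx // eq_sym.
  - by apply: set3_subset; rewrite !inE eqxx ?orbT.
apply: (@rainbow_Stree_path _ _ _ x [:: z; y]).
- by rewrite /= !inE negb_or xy xz (eq_sym z) yz.
- by rewrite /= !e_cross // eq_sym.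
- by rewrite /= inE andbT [[set z; y]]setUC cross_colour_neq // eq_sym.
- by apply: set3_subset; rewrite !inE eqxx ?orbT.
Qed.

Lemma rainbow_two_classes x y z : side y = side x -> side z = side x ->
  cl y = cl x -> cl z != cl x -> x != y -> rainbow_Stree e edge_colour [set x; y; z].
Proof.
move=> syx szx cyx czx xy; have [u su] := side_surj (~~ side x).
have sux : side u != side x by rewrite su; case: (side x).
have suy : side u != side y by rewrite syx.
have suz : side u != side z by rewrite szx.
have [xu yu zu] : [/\ x != u, y != u & z != u].
  by split; [move: sux | move: suy | move: suz]; apply: contraNneq => ->.
have [xz yz] : x != z /\ y != z.
  by split; [move: czx | move: czx; rewrite -cyx]; apply: contraNneq => ->.
apply: (@rainbow_Stree_path _ _ _ x [:: y; u; z]).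
- by rewrite /= !inE !negb_or xy xu xz yu yz (eq_sym u) zu.
- by rewrite /= e_class ?e_cross // 1?eq_sym.
- rewrite /= !inE !negb_or andbT !(inner_cross_neq xy) ?syx // 1?eq_sym //=.
  by rewrite [[set u; z]]setUC cross_colour_neq ?cyx // eq_sym.
- by apply: set3_subset; rewrite !inE eqxx ?orbT.
Qed.

Lemma rainbow_three_classes x y z : side y = side x -> side z = side x ->
  cl x != cl y -> cl z != cl x -> cl z != cl y -> rainbow_Stree e edge_colour [set x; y; z].
Proof.
move=> syx szx cxy czx czy; have [u su] := side_surj (~~ side x).
have sux : side u != side x by rewrite su; case: (side x).
have suy : side u != side y by rewrite syx.
have suz : side u != side z by rewrite szx.
have [xu yu zu] : [/\ x != u, y != u & z != u].
  by split; [move: sux | move: suy | move: suz]; apply: contraNneq => ->.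
have [xy zx zy] : [/\ x != y, z != x & z != y].
  by split; [move: cxy | move: czx | move: czy]; apply: contraNneq => ->.
have cross_u v : side v = side x -> side v != side u.
  by move=> ->; rewrite eq_sym.
have tree_xuy : rainbow_tree_on e edge_colour [set v in [:: x; u; y]]
    [:: edge_colour [set x; u]; edge_colour [set u; y]].
  apply: rainbow_tree_on_path.
  - by rewrite /= !inE !negb_or xu xy (eq_sym u) yu.
  - by rewrite /= !e_cross ?cross_u // eq_sym cross_u.
  - by rewrite /= inE andbT [[set u; y]]setUC cross_colour_neq ?cross_u.
apply: (rainbow_tree_on_Stree (rainbow_tree_on_add tree_xuy (x := z) (y := u) _ _ _ _)).
- by rewrite !inE !negb_or zx zu zy.
- by rewrite !inE eqxx orbT.
- by rewrite e_cross ?cross_u.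
- by rewrite !inE !negb_or [[set u; y]]setUC !cross_colour_neq ?cross_u // eq_sym.
- by apply/subsetP => v; rewrite !inE -!orbA => /or3P[]/eqP->; rewrite eqxx ?orbT.
Qed.

Lemma rank_class x y : side y = side x -> cl y = cl x -> rank y = index y (enum (class x)).
Proof. by move=> syx cyx; rewrite /rank /class syx cyx. Qed.

Lemma mem_enum_class x v : (v \in enum (class x)) = (side v == side x) && (cl v == cl x).
Proof. by rewrite mem_enum inE. Qed.

Lemma class_path x v p : let s := enum (class x) in
  {subset v :: p <= s} -> uniq (v :: p) -> path e v p /\
    pairmap (fun a b => edge_colour [set a; b]) v p =
    pairmap (fun a b => (a + b) %% 4) (index v s) (map (index^~ s) p).
Proof.
move=> s; elim: p v => [//|w p IHp] v sub /andP[]; rewrite inE negb_or => /andP[vw _] uwp.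
have sub_wp : {subset w :: p <= s} by move=> u up; apply: sub; rewrite inE up orbT.
have [pwp cols] := IHp w sub_wp uwp; rewrite /= pwp cols andbT.
have := sub v (mem_head _ _); have := sub_wp w (mem_head _ _).
rewrite !mem_enum_class => /andP[/eqP sw /eqP cw] /andP[/eqP sv /eqP cv].
rewrite e_class ?sv ?sw ?cv ?cw // edge_colour_inner ?sv ?sw //.
by rewrite !(rank_class (x := x)).
Qed.

Lemma rainbow_one_class x y z : side y = side x -> side z = side x ->
  cl y = cl x -> cl z = cl x -> x != y -> x != z -> y != z ->
  rainbow_Stree e edge_colour [set x; y; z].
Proof.
move=> syx szx cyx czx xy xz yz.
pose s := enum (class x); pose i v := index v s.
have rainbow_path_in_class v p : {subset v :: p <= s} -> uniq (i v :: map i p) ->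
    uniq (pairmap (fun a b => (a + b) %% 4) (i v) (map i p)) ->
    {subset [:: x; y; z] <= v :: p} -> rainbow_Stree e edge_colour [set x; y; z].
  move=> sub ui ucols sxyz; have up : uniq (v :: p) := @map_uniq _ _ i (v :: p) ui.
  have [pth cols] := class_path sub up.
  apply: (@rainbow_Stree_path _ _ _ v p); rewrite ?cols //.
  by apply: set3_subset; apply: sxyz; rewrite !inE eqxx ?orbT.
have [xs ys zs] : [/\ x \in s, y \in s & z \in s].
  by split; rewrite mem_enum_class ?syx ?szx ?cyx ?czx !eqxx.
have i_lt v : v \in s -> i v < size s by rewrite index_mem.
have [ixy ixz iyz] : [/\ i x != i y, i x != i z & i y != i z].
  by split; [move: xy | move: xz | move: yz]; apply: contra_neq; apply: index_inj.
have xyz_s : {subset [:: x; y; z] <= s} by move=> u /[!inE] /or3P[]/eqP->.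
have [Dxz|Dxz] := eqVneq (i x %% 4) (i z %% 4); last first.
  apply: (rainbow_path_in_class x [:: y; z] xyz_s) => //.
    by rewrite /= !inE negb_or ixy ixz iyz.
  by rewrite /= inE andbT addn_mod4_neq.
have [Dyz|Dyz] := eqVneq (i y %% 4) (i z %% 4); last first.
  apply: (rainbow_path_in_class y [:: x; z]).
  - by move=> u /[!inE] /or3P[]/eqP->.
  - by rewrite /= !inE negb_or eq_sym ixy iyz ixz.
  - by rewrite /= inE andbT addn_mod4_neq.
  - by move=> u /[!inE] /or3P[]/eqP->; rewrite eqxx ?orbT.
have [r2_lt uidx ucols] := mod4_detour ixy ixz iyz (i_lt x xs) (i_lt y ys) (i_lt z zs)
  (etrans Dxz (esym Dyz)) Dyz.
pose w1 := nth x s (i x %% 4 + 1); pose w2 := nth x s (i x %% 4 + 2).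
have r1_lt : i x %% 4 + 1 < size s by apply: leq_ltn_trans r2_lt; rewrite leq_add2l.
have [w1s w2s] : w1 \in s /\ w2 \in s by split; apply: mem_nth.
have [iw1 iw2] : i w1 = i x %% 4 + 1 /\ i w2 = i x %% 4 + 2.
  by split; apply: index_uniq; rewrite ?enum_uniq.
apply: (rainbow_path_in_class x [:: y; w1; w2; z]); rewrite /= ?iw1 ?iw2 //.
- by move=> u /[!inE] /or4P[|||/orP[]]/eqP->.
- by move=> u /[!inE] /or3P[]/eqP->; rewrite eqxx ?orbT.
Qed.

Lemma rainbow_set3 x y z : x != y -> x != z -> y != z ->
  rainbow_Stree e edge_colour [set x; y; z].
Proof.
wlog syx : x y z / side y = side x.
  move=> wlog_syx xy xz yz.
  have [syx|syx] := eqVneq (side y) (side x); first exact: wlog_syx.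
  have [szx|szx] := eqVneq (side z) (side x).
    by rewrite set3C23; apply: wlog_syx; rewrite // eq_sym.
  have szy : side z = side y.
    by move: syx szx; case: (side x); case: (side y); case: (side z).
  by rewrite set3C12 set3C23; apply: wlog_syx; rewrite // eq_sym.
move=> xy xz yz.
have [szx|szx] := eqVneq (side z) (side x); last exact: rainbow_cross.
have [cyx|cyx] := eqVneq (cl y) (cl x).
  have [czx|czx] := eqVneq (cl z) (cl x); first exact: rainbow_one_class.
  exact: rainbow_two_classes.
have [czx|czx] := eqVneq (cl z) (cl x).
  by rewrite set3C23; apply: rainbow_two_classes; rewrite // eq_sym.
have [czy|czy] := eqVneq (cl z) (cl y).
  by rewrite set3C12 set3C23; apply: rainbow_two_classes; rewrite ?szx ?syx // eq_sym.
by apply: rainbow_three_classes; rewrite // eq_sym.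
Qed.

Lemma rainbow3_edge_colouring :
  exists c : {ffun {set T} -> 'I_(4 + m)}, rainbow3_coloring e c.
Proof.
have m_gt0 : 0 < m by have [u _] := side_surj true; apply: leq_ltn_trans (cl_lt u).
exists [ffun f => inord (edge_colour f)]; apply: rainbow3_coloring_triples => x y z xy xz yz.
rewrite (@eq_rainbow_Stree _ _ _ edge_colour); first exact: rainbow_set3.
by move=> f; rewrite ffunE inordK //; apply: edge_colour_lt.
Qed.

End Colouring.

Lemma star_free_independent (T : finType) (e : rel T) r v (U J : {set T}) :
  star_free e r -> v \notin U -> {in U, forall x, e v x} ->
  J \subset U -> independent e J -> #|J| != r.
Proof.
move=> noK vU evU /subsetP JU /independentP indJ; apply/eqP => cardJ.
apply: noK; exists v, J; split => //; first by apply: contra vU; apply: JU.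
  by move=> x /JU; apply: evU.
by move=> x y xJ yJ _; apply: indJ.
Qed.

Lemma bigminn_le (I : finType) (P : pred I) (F : I -> nat) d i :
  P i -> \big[minn/d]_(j | P j) F j <= F i.
Proof.
move=> Pi; have : i \in index_enum I by rewrite mem_index_enum.
elim: (index_enum I) => [//|j s IHs]; rewrite big_cons inE => /predU1P[<-|i_s].
  by rewrite Pi geq_minl.
by case: (P j); [apply: leq_trans (geq_minr _ _) (IHs i_s) | exact: IHs i_s].
Qed.

Lemma rx3_le (T : finType) (e : rel T) k (c : {ffun {set T} -> 'I_k}) :
  rainbow3_coloring e c -> rx3 e <= k.
Proof.
move=> rc; rewrite /rx3; have [k_le|k_gt] := leqP k (#|T| ^ 2).
  have k_lt : k < (#|T| ^ 2).+1 by [].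
  apply: (@bigminn_le _ (fun j : 'I__ => [exists c : {ffun {set T} -> 'I_j}, rainbow3_coloring e c])
    (fun j => j) _ (Ordinal k_lt)).
  by apply/existsP; exists c.
apply: leq_trans (ltnW k_gt); elim/big_ind: _ => // [a b|j _]; first by rewrite geq_min => ->.
by rewrite -ltnS.
Qed.

Lemma join_of_clique_partitions (T : finType) (e : rel T) k :
  symmetric e -> irreflexive e -> P4_free e -> connected_graph e -> 1 < #|T| ->
  star_free e k.+1 ->
  exists (side : T -> bool) (cl : T -> nat),
    [/\ forall x, cl x < k,
        forall x y, side x = side y -> cl x = cl y -> x != y -> e x y,
        forall x y, side x != side y -> e x y
      & forall b, exists u, side u = b].
Proof.
move=> esym eirr P4f conn T_gt1 noK.
have [W [W0 nW0 eW]] := join_decomposition esym eirr P4f conn T_gt1.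
have [w wW] := set0Pn _ W0; have [a] := set0Pn _ nW0; rewrite inE => aW.
have cover (U : {set T}) v : v \notin U -> {in U, forall x, e v x} ->
    exists f : T -> nat, {in U, forall x, f x < k} /\
      {in U &, forall x y, x != y -> f x = f y -> e x y}.
  by move=> vU evU; apply: clique_cover => // J; apply: star_free_independent noK vU evU.
have [fA [fA_lt fA_clique]] : exists f : T -> nat, {in ~: W, forall x, f x < k} /\
    {in ~: W &, forall x y, x != y -> f x = f y -> e x y}.
  by apply: (cover _ w) => [|x xA]; rewrite ?inE ?wW // esym; apply: eW.
have [fB [fB_lt fB_clique]] : exists f : T -> nat, {in W, forall x, f x < k} /\
    {in W &, forall x y, x != y -> f x = f y -> e x y}.
  by apply: (cover _ a aW) => x xW; apply: eW; rewrite ?inE.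
exists (mem W), (fun x => if x \in W then fB x else fA x); split.
- by move=> x; case: ifP => xW; [apply: fB_lt | apply: fA_lt; rewrite inE xW].
- move=> x y /= sxy; have [xW|xA] := boolP (x \in W).
    by rewrite -sxy xW => cxy xy; apply: fB_clique; rewrite -?sxy.
  by rewrite -sxy (negbTE xA) => cxy xy; apply: fA_clique; rewrite ?inE -?sxy.
- move=> x y /=; case: (boolP (x \in W)) => xW; case: (boolP (y \in W)) => yW //= _.
    by rewrite esym; apply: eW; rewrite ?inE.
  by apply: eW; rewrite ?inE.
by case; [exists w | exists a; apply/negbTE].
Qed.

Theorem theorem7 (T : finType) (e : rel T) (r : nat) :
  simple_graph e -> connected_graph e -> 3 <= #|T| -> 3 <= r ->
  P4_free e -> star_free e r ->
  rx3 e <= sdiam3 e + r + 3.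
Proof.
move=> [esym eirr] conn T_ge3 r_ge3 P4f noK.
case: r r_ge3 noK => [//|k] _ noK.
have [side [cl [cl_lt e_class e_cross side_surj]]] :=
  join_of_clique_partitions esym eirr P4f conn (ltnW T_ge3) noK.
have [c rc] := rainbow3_edge_colouring cl_lt e_class e_cross side_surj.
have := rx3_le rc; lia.
Qed.
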